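(* For integers $N\ge 0$ and $i\ge 0$, the number of reversed partial ternary paths of length $3N+2i$ ending at level $i$ equals $$\sum_{0\le k\le i/2}\binom{i-k}{k}\left[\binom{3N+2i+1}{N+k}-3\binom{3N+2i}{N+k-1}\right],$$ with the convention $\binom{a}{b}=0$ for $b<0$.
   Context: A reversed partial ternary path of length $n$ is a lattice path $(0,c_0),\dots,(n,c_n)$ with $c_0=0$, each step being either $(1,2)$ or $(1,-1)$, never going below the $x$-axis; it ends at level $c_n$. Equivalently, these are final segments of ternary paths (steps $(1,1)$ and $(1,-2)$, staying weakly above the $x$-axis, ending on the $x$-axis) read from right to left. *)

From mathcomp Require Import all_boot all_order all_algebra.
Set Implicit Arguments. Unset Strict Implicit. Unset Printing Implicit Defensive.
Import GRing.Theory Num.Theory.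

(* A path of length n with steps (1,2) (encoded true) and (1,-1) (encoded false),
   starting at (0,0). *)
Definition step_val (b : bool) : int := if b then Posz 2 else (-1)%R.

Definition level (s : seq bool) (m : nat) : int :=
  (\sum_(b <- take m s) step_val b)%R.

Definition nonneg_path (s : seq bool) : bool :=
  [forall m : 'I_(size s).+1, (0 <= level s m)%R].

Definition num_rpt (n i : nat) : nat :=
  #|[set t : n.-tuple bool | nonneg_path t && (level t n == Posz i)]|.

From mathcomp Require Import all_boot all_order all_algebra.
From mathcomp Require Import zify ring.
Import GRing.Theory Num.Theory.
Set Implicit Arguments. Unset Strict Implicit. Unset Printing Implicit Defensive.

(* Let c(n, z) count the nonnegative paths of length n ending at level z.  Removing
   the last step gives c(n+1, z) = c(n, z-2) + c(n, z+1) for z >= 0, with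
   c(n, z) = 0 for z < 0 and c(0, z) = [z = 0].  The ballot-like numbers
   A(n, m) = C(n+1, m) - 3 C(n, m-1) satisfy Pascal's rule in n, and the diagonal
   binomials C(j-k, k) satisfy Fibonacci's rule in j; hence
   S(n, j, m) = sum_k C(j-k, k) A(n, m+k) satisfies the same recurrence as c along
   the lines n = 3m + 2j, where m must range over all integers since the step to
   level j+1 lowers m.  The boundary level j = 0 works because A vanishes just
   beyond the line: C(3M+3, M+1) = 3 C(3M+2, M). *)

Local Open Scope ring_scope.

Definition binz (a : nat) (m : int) : int :=
  match m with Posz k => Posz 'C(a, k) | Negz _ => 0 end.

Lemma binz_neg a m : m < 0 -> binz a m = 0.
Proof. by case: m. Qed.

Lemma binzS a m : binz a.+1 m = binz a m + binz a (m - 1).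
Proof.
case: m => [[|k]|k].
- have -> : Posz 0 - 1 = Negz 0 by [].
  by rewrite /= addr0 !bin0.
- have -> : Posz k.+1 - 1 = Posz k by lia.
  by rewrite /= binS PoszD addrC.
- rewrite !binz_neg ?addr0 //; lia.
Qed.

Definition ballot (n : nat) (m : int) : int := binz n.+1 m - 3 * binz n (m - 1).

Lemma ballotS n m : ballot n.+1 m = ballot n m + ballot n (m - 1).
Proof. rewrite /ballot binzS (binzS n (m - 1)); ring. Qed.

Lemma ballot_vanish M : ballot (3 * M + 2) (Posz M.+1) = 0.
Proof.
rewrite /ballot; have -> : Posz M.+1 - 1 = Posz M by lia.
have bin_ratio : 'C((3 * M + 2).+1, M.+1) = (3 * 'C(3 * M + 2, M))%N.
  apply/eqP; rewrite -(eqn_pmul2l (ltn0Sn M)) -mul_bin_diag.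
  have -> : (3 * M + 2).+1 = (3 * M.+1)%N by lia.
  have -> : (3 * M.+1).-1 = (3 * M + 2)%N by lia.
  by rewrite (mulnC 3) -mulnA.
by rewrite /= bin_ratio PoszM subrr.
Qed.

Lemma bin_antidiagS j k : 'C(j.+1 - k, k.+1) = ('C(j - k, k) + 'C(j - k, k.+1))%N.
Proof.
have [lt_jk|le_kj] := ltnP j k; last by rewrite subSn // binS addnC.
have -> : (j.+1 - k = 0)%N by lia.
have -> : (j - k = 0)%N by lia.
by rewrite !bin0n; case: k lt_jk.
Qed.

Definition rpt_sum (n j : nat) (m : int) : int :=
  \sum_(0 <= k < j.+1) Posz 'C(j - k, k) * ballot n (m + Posz k).

Lemma rpt_sum0 n m : rpt_sum n 0 m = ballot n m.
Proof. by rewrite /rpt_sum big_nat1 bin0 mul1r addr0. Qed.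

Lemma rpt_sum1 n m : rpt_sum n 1 m = ballot n m.
Proof. by rewrite /rpt_sum big_nat_recr //= big_nat1 bin0 mul1r addr0 mul0r addr0. Qed.

Lemma rpt_sum_recl n j m : rpt_sum n j.+1 m =
  ballot n m + \sum_(0 <= k < j.+1) Posz 'C(j - k, k.+1) * ballot n (m + 1 + Posz k).
Proof.
rewrite /rpt_sum big_nat_recl // subn0 bin0 mul1r addr0; congr (_ + _).
apply: eq_bigr => k _; rewrite subSS; congr (_ * ballot n _); lia.
Qed.

Lemma rpt_sumSS n j m : rpt_sum n j.+2 m = rpt_sum n j.+1 m + rpt_sum n j (m + 1).
Proof.
rewrite rpt_sum_recl (rpt_sum_recl n j) -[RHS]addrA; congr (_ + _).
rewrite /rpt_sum [in LHS]big_nat_recr //= subnn bin0n mul0r addr0 -big_split /=.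
by apply: eq_bigr => k _; rewrite bin_antidiagS PoszD mulrDl addrC.
Qed.

Lemma rpt_sum_lenS n j m : rpt_sum n.+1 j m = rpt_sum n j m + rpt_sum n j (m - 1).
Proof.
rewrite /rpt_sum -big_split; apply: eq_bigr => k _ /=; rewrite ballotS -mulrDr.
congr (_ * (_ + ballot n _)); lia.
Qed.

Lemma rpt_sum_len0 j m : 3 * m + Posz (2 * j) = 0 -> rpt_sum 0 j m = (j == 0%N).
Proof.
case: j => [|j] line.
  have -> : m = 0 by lia.
  by rewrite rpt_sum0 /ballot (binz_neg _ (m := 0 - 1)).
(* C(j-k, k) needs 2k <= j, while ballot 0 (m+k) needs m+k >= 0, i.e. 3k >= 2j. *)
rewrite /rpt_sum big_nat big1 // => k /andP [_ le_kj].
have [lt_jk|le_kj2] := ltnP j.+1 (2 * k).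
  by rewrite bin_small ?mul0r //; lia.
by rewrite /ballot !binz_neg ?mulr0 //; lia.
Qed.

Lemma rpt_sum_level0 n m : 3 * m = Posz n.+1 ->
  rpt_sum n.+1 0 m = rpt_sum n 1 (m - 1).
Proof.
case: m => [[|M]|M] line; try lia.
have -> : n = (3 * M + 2)%N by lia.
by rewrite rpt_sum0 rpt_sum1 ballotS ballot_vanish add0r.
Qed.

Lemma rpt_sum_level1 n m : rpt_sum n.+1 1 m = rpt_sum n 2 (m - 1).
Proof. by rewrite rpt_sum_lenS rpt_sumSS subrK !rpt_sum1 rpt_sum0 addrC. Qed.

Lemma rpt_sum_levelSS n j m :
  rpt_sum n.+1 j.+2 m = rpt_sum n j (m + 1) + rpt_sum n j.+3 (m - 1).
Proof.
rewrite rpt_sum_lenS (rpt_sumSS n j.+1 (m - 1)) subrK (rpt_sumSS n j m); ring.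
Qed.

Local Close Scope ring_scope.

Lemma big_tuple_rcons (R : Type) (idx : R) (op : Monoid.com_law idx)
    (T : finType) (n : nat) (F : n.+1.-tuple T -> R) :
  \big[op/idx]_(u : n.+1.-tuple T) F u =
  \big[op/idx]_(t : n.-tuple T) \big[op/idx]_(x : T) F [tuple of rcons t x].
Proof.
have tuple_rcons (u : n.+1.-tuple T) :
    val u = rcons (belast (thead u) (behead u)) (last (thead u) (behead u)).
  by rewrite -lastI {1}(tuple_eta u).
pose split_last (u : n.+1.-tuple T) :=
  ([tuple of belast (thead u) (behead u)] : n.-tuple T, last (thead u) (behead u)).
rewrite (reindex (fun p : n.-tuple T * T => [tuple of rcons p.1 p.2])).
  by rewrite -(pair_big xpredT xpredT (fun (t : n.-tuple T) x => F [tuple of rcons t x])).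
apply: onW_bij; exists split_last => [[t x]|u]; last first.
  by apply: val_inj; rewrite /= -tuple_rcons.
have /= /rcons_inj [t_eq x_eq] := tuple_rcons [tuple of rcons t x].
by congr (_, _); [apply: val_inj; rewrite /= -t_eq | rewrite -x_eq].
Qed.

Lemma card_set_sum (T : finType) (P : pred T) : #|[set x | P x]| = \sum_x P x.
Proof.
rewrite -sum1dep_card big_mkcond; apply: eq_bigr => x _.
by case: (P x).
Qed.

Lemma level_rcons_take (s : seq bool) b m :
  m <= size s -> level (rcons s b) m = level s m.
Proof. by move=> le_ms; rewrite /level -cats1 takel_cat. Qed.

Lemma level_rcons (s : seq bool) b n :
  size s = n -> level (rcons s b) n.+1 = (level s n + step_val b)%R.
Proof.
move<-; rewrite /level take_oversize ?size_rcons // take_size.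
by rewrite -cats1 big_cat /= big_seq1.
Qed.

Lemma nonneg_path_nil : nonneg_path [::].
Proof. by apply/forallP => m; rewrite /level /= big_nil. Qed.

Lemma nonneg_path_last s : nonneg_path s -> (0 <= level s (size s))%R.
Proof. by move/forallP/(_ ord_max). Qed.

Lemma nonneg_path_rcons (s : seq bool) b :
  nonneg_path (rcons s b) = nonneg_path s && (0 <= level s (size s) + step_val b)%R.
Proof.
apply/forallP/andP => [nonneg_sb | [/forallP nonneg_s nonneg_end] m].
  split; last first.
    by have := nonneg_sb (inord (size s).+1); rewrite inordK ?size_rcons // level_rcons.
  apply/forallP => m; have lt_m := ltn_ord m.
  have := nonneg_sb (inord m); rewrite inordK ?size_rcons; last by lia.
  by rewrite level_rcons_take //; lia.
have [le_ms|lt_sm] := leqP m (size s).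
  by rewrite level_rcons_take //; have := nonneg_s (inord m); rewrite inordK.
have -> : nat_of_ord m = (size s).+1 by have := ltn_ord m; have := size_rcons s b; lia.
by rewrite level_rcons.
Qed.

Definition num_paths (n : nat) (z : int) : nat :=
  #|[set t : n.-tuple bool | nonneg_path t && (level t n == z)]|.

Lemma num_paths_neg n z : (z < 0)%R -> num_paths n z = 0.
Proof.
move=> z_neg; rewrite /num_paths card_set_sum big1 // => t _.
case nonneg_t: (nonneg_path t) => //=.
have := nonneg_path_last nonneg_t; rewrite size_tuple.
by case: eqP => // ->; lia.
Qed.

Lemma num_paths0 z : num_paths 0 z = (z == 0%R).
Proof.
rewrite /num_paths card_set_sum (eq_bigr (fun=> nat_of_bool (z == 0%R))).
  by rewrite sum_nat_const card_tuple mul1n.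
by move=> t _; rewrite tuple0 nonneg_path_nil /level big_nil eq_sym.
Qed.

Lemma num_pathsS n z : (0 <= z)%R ->
  num_paths n.+1 z = num_paths n (z - 2) + num_paths n (z + 1).
Proof.
move=> z_nonneg; rewrite /num_paths !card_set_sum big_tuple_rcons -big_split /=.
apply: eq_bigr => t _; rewrite big_bool /=.
rewrite !nonneg_path_rcons !level_rcons ?size_tuple //=.
case nonneg_t: (nonneg_path t) => //=.
have := nonneg_path_last nonneg_t; rewrite size_tuple => level_nonneg.
congr (nat_of_bool _ + nat_of_bool _).
  by rewrite (_ : 0 <= _)%R ?(lerD level_nonneg) //; apply/eqP/eqP; lia.
by apply/andP/eqP => [[_ /eqP]|]; lia.
Qed.

Lemma num_paths_rpt_sum n : forall j (m : int), (3 * m + Posz (2 * j) = Posz n)%R ->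
  Posz (num_paths n (Posz j)) = rpt_sum n j m.
Proof.
elim: n => [|n IHn] j m line.
  by rewrite num_paths0 rpt_sum_len0.
rewrite num_pathsS // PoszD.
case: j line => [|[|j]] line.
- rewrite num_paths_neg // add0r (IHn 1%N (m - 1)%R); last by lia.
  by rewrite rpt_sum_level0 //; lia.
- rewrite num_paths_neg // add0r (IHn 2%N (m - 1)%R); last by lia.
  by rewrite rpt_sum_level1.
- have -> : (Posz j.+2 - 2 = Posz j)%R by lia.
  have -> : (Posz j.+2 + 1 = Posz j.+3)%R by lia.
  rewrite (IHn j (m + 1)%R); last by lia.
  by rewrite (IHn j.+3 (m - 1)%R) ?rpt_sum_levelSS //; lia.
Qed.

Theorem mainTheorem2 (N i : nat) :
  Posz (num_rpt (3 * N + 2 * i) i) =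
  (\sum_(0 <= k < (i %/ 2).+1)
     Posz 'C(i - k, k) *
     (Posz 'C(3 * N + 2 * i + 1, N + k)
      - 3 * (if (0 < N + k)%N then Posz 'C(3 * N + 2 * i, N + k - 1) else 0)))%R.
Proof.
rewrite (num_paths_rpt_sum (m := Posz N)); last by lia.
rewrite /rpt_sum (big_cat_nat _ (n := (i %/ 2).+1)) //=; last by lia.
rewrite [(\sum_((i %/ 2).+1 <= k < i.+1) _)%R]big1_seq ?addr0; last first.
  move=> k /andP [_]; rewrite mem_index_iota => /andP [lt_half _].
  by rewrite bin_small ?mul0r //; lia.
apply: eq_bigr => k _; congr (_ * _)%R.
by rewrite /ballot -PoszD addn1; case: (N + k).
Qed.
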